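(* Let $\Omega\subseteq\mathbb{R}^N$ be open and bounded, and let $\rho$, $\Delta$, $\Theta=\partial\Omega\cup\Delta$, $\eta$, $T$ and $T_n$ be as described in the context. If $f\in C(\overline{\Omega})$, then $Tf$ extends to a function in $C(\overline{\Omega})$ which coincides with $f$ on $\partial\Omega\cup\Delta$, and $T_nf\to f$ uniformly as $n\to\infty$. Further, if $f\in C(\Omega)$ and $\Gamma\subseteq\partial\Omega$ is a closed set such that $\mathrm{supp}(f)\cap\Gamma=\emptyset$, then also $\mathrm{supp}(Tf)\cap\Gamma=\emptyset$.
   Context: $\rho\in C_c^\infty(\mathbb{R}^N)$ satisfies $0\le\rho\le1$, $\rho(x)=0$ iff $|x|\ge1$, $\rho$ is radially symmetric, and $\rho(x)\ge\rho(1/2)$ for all $|x|<1/2$ (where $\rho(1/2)$ denotes the common value of $\rho$ on the sphere $|x|=1/2$). Set $M_\rho:=(\int_{B_1(0)}\rho(y)\,dy)^{-1}$. Let $\Delta\subseteq\overline{\Omega}$ (possibly empty) be such that $\Theta:=\partial\Omega\cup\Delta$ is closed, and let $\eta\in C^\infty(\mathbb{R}^N)$ be non-negative with $\eta^{-1}(\{0\})=\Theta$, all derivatives of $\eta$ vanishing on $\Theta$, and $\eta(x)<\mathrm{dist}(x,\Theta)$ for every $x\in\mathbb{R}^N\setminus\Theta$. For $f\in L^1_{loc}(\Omega)$, $x\in\Omega$ and $n\in\mathbb{N}$ define $Tf(x):=M_\rho\int_{B_1(0)}\rho(z)f(x-\eta(x)z)\,dz$ and $T_nf(x):=M_\rho\int_{B_1(0)}\rho(z)f(x-\tfrac{\eta(x)}{n}z)\,dz$.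 Thus $Tf(x)=f(x)$ if $\eta(x)=0$, and $Tf(x)=\frac{M_\rho}{\eta(x)^N}\int_\Omega\rho\big(\frac{x-y}{\eta(x)}\big)f(y)\,dy$ if $\eta(x)>0$. For $f:\Omega\to\mathbb{R}$, $\mathrm{supp}(f)$ denotes the closure of $\{x\in\Omega:f(x)\neq0\}$. *)

From HB Require Import structures.
From mathcomp Require Import all_boot all_order all_algebra.
From mathcomp Require Import all_classical all_reals all_analysis.
Set Implicit Arguments. Unset Strict Implicit. Unset Printing Implicit Defensive.
Import Order.TTheory GRing.Theory Num.Theory.
Import numFieldNormedType.Exports.
Local Open Scope classical_set_scope.
Local Open Scope ring_scope.

(* R^N is represented by row vectors 'rV[R]_N (its topology is the usual one). *)

Definition enorm (R : realType) (N : nat) (x : 'rV[R]_N) : R :=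
  Num.sqrt (\sum_(i < N) x 0 i ^+ 2).

Definition bdry (R : realType) (N : nat) (A : set 'rV[R]_N) : set 'rV[R]_N :=
  closure A `\` interior A.

(* Euclidean distance from a point to a set, in the extended reals
   (= +oo for the empty set). *)
Definition distE (R : realType) (N : nat) (x : 'rV[R]_N) (A : set 'rV[R]_N)
  : \bar R := ereal_inf [set (enorm (x - y))%:E | y in A].

Definition evec (R : realType) (N : nat) (i : 'I_N) : 'rV[R]_N := delta_mx 0 i.

Fixpoint ipartial (R : realType) (N : nat) (l : seq 'I_N) (f : 'rV[R]_N -> R)
  : 'rV[R]_N -> R :=
  match l with
  | [::] => f
  | i :: l' => fun x => derive (ipartial l' f) x (evec R i)
  end.

Definition smooth (R : realType) (N : nat) (f : 'rV[R]_N -> R) : Prop :=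
  forall l : seq 'I_N,
    continuous (ipartial l f) /\
    forall (i : 'I_N) (x : 'rV[R]_N), derivable (ipartial l f) x (evec R i).

(* Integral over R^N (w.r.t. Lebesgue measure), written as the iterated
   one-dimensional Lebesgue integral; it coincides with the N-dimensional
   Lebesgue integral for the (continuous, compactly supported) integrands
   used below (Fubini). *)
Fixpoint intRN (R : realType) (N : nat) : ('rV[R]_N -> R) -> R :=
  match N return ('rV[R]_N -> R) -> R with
  | 0 => fun g => g 0
  | N'.+1 => fun g =>
      Rintegral (@lebesgue_measure R) setT
        (fun t : R => @intRN R N' (fun v : 'rV[R]_N' =>
                          g (row_mx (const_mx t : 'rV[R]_1) v)))
  end.

Definition Mrho (R : realType) (N : nat) (rho : 'rV[R]_N -> R) : R :=
  (intRN (fun y => if enorm y < 1 then rho y else 0))^-1.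

Definition Top (R : realType) (N : nat) (rho eta : 'rV[R]_N -> R)
  (f : 'rV[R]_N -> R) (x : 'rV[R]_N) : R :=
  Mrho rho * intRN (fun z => if enorm z < 1 then rho z * f (x - eta x *: z) else 0).

Definition Topn (R : realType) (N : nat) (rho eta : 'rV[R]_N -> R) (n : nat)
  (f : 'rV[R]_N -> R) (x : 'rV[R]_N) : R :=
  Mrho rho *
  intRN (fun z => if enorm z < 1 then rho z * f (x - (eta x / n%:R) *: z) else 0).

Definition supp (R : realType) (N : nat) (Omega : set 'rV[R]_N)
  (f : 'rV[R]_N -> R) : set 'rV[R]_N :=
  closure [set x | Omega x /\ f x <> 0].

From HB Require Import structures.
From mathcomp Require Import all_boot all_order all_algebra.
From mathcomp Require Import all_classical all_reals all_analysis.
From mathcomp Require Import ring lra.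
Set Implicit Arguments. Unset Strict Implicit. Unset Printing Implicit Defensive.
Import Order.TTheory GRing.Theory Num.Theory.
Import numFieldNormedType.Exports.
Local Open Scope classical_set_scope.
Local Open Scope ring_scope.

(* Because rho vanishes off the unit ball and eta(x) is smaller than the distance
   from x to the boundary, a connectedness argument along segments shows that every
   point x - eta(x) z sampled by Tf(x) lies in Omega: Tf(x) is a weighted average
   of f over a ball inside Omega, and Tf(x) = f(x) where eta vanishes.  The iterated
   integral is 2^N-Lipschitz for the sup norm on continuous functions supported in
   the unit cube, so uniform continuity of f on the compact closure of Omega and
   continuity of eta make Tf continuous up to the boundary, while the radii
   eta(x)/n <= (max eta)/n give T_n f -> f uniformly.  Finally eta(x) <= |x - p|
   for p on the boundary, so near a point of Gamma, Tf only samples f near Gamma,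
   where f vanishes. *)

Section metric_continuity.
Variables (R : realType) (V : pseudoMetricNormedZmodType R).
Implicit Types (f : V -> R) (K : set V).

Lemma within_continuous_distP f K : {within K, continuous f} <->
  forall x, K x -> forall e, 0 < e -> exists2 d, 0 < d &
    forall y, K y -> `|x - y| < d -> `|f x - f y| < e.
Proof.
split => [/subspace_continuousP cf x Kx e e0|cf].
  have /nbhs_ballP[d d0 xd] : \forall y \near x, K y -> `|f x - f y| < e.
    exact: (cvgrPdist_lt _ _).1 (cf x Kx) e e0.
  by exists d => // y Ky xy; apply: xd; rewrite // -ball_normE.
apply/subspace_continuousP => x Kx; apply/cvgrPdist_lt => e e0.
have [d d0 xd] := cf x Kx e e0.
by apply/nbhs_ballP; exists d => // y; rewrite -ball_normE /= => xy Ky; exact: xd.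
Qed.

Lemma continuous_distP f : continuous f <->
  forall x e, 0 < e -> exists2 d, 0 < d & forall y, `|x - y| < d -> `|f x - f y| < e.
Proof.
split => [cf x e e0|cf x]; last first.
  apply/cvgrPdist_lt => e e0; have [d d0 xd] := cf x e e0.
  by apply/nbhs_ballP; exists d => // y; rewrite -ball_normE /=; exact: xd.
have /nbhs_ballP[d d0 xd] : \forall y \near x, `|f x - f y| < e.
  exact: (cvgrPdist_lt _ _).1 (cf x) e e0.
by exists d => // y xy; apply: xd; rewrite -ball_normE.
Qed.

Lemma compact_uniform_continuous f K : compact K -> {within K, continuous f} ->
  forall e, 0 < e -> exists2 d, 0 < d &
    forall x y, K x -> K y -> `|x - y| < d -> `|f x - f y| < e.
Proof.
move=> cK /within_continuous_distP cf e e0.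
have e20 : 0 < e / 2 by rewrite divr_gt0.
pose is_modulus d := K `<=` (fun x => forall y, K y -> `|x - y| < d -> `|f x - f y| < e).
have : \forall d \near 0^'+, is_modulus d.
  apply: ((near_covering_withinP K).2 ((compact_near_coveringP K).1 cK) R (0^'+)
    (fun d x => forall y, K y -> `|x - y| < d -> `|f x - f y| < e)) => x Kx.
  have [r r0 xr] := cf x Kx _ e20.
  exists (ball x (r / 2), [set d | 0 < d < r / 2]); [split => /= |].
  - by apply: nbhsx_ballx; rewrite divr_gt0.
  - by near=> d; apply/andP; split; near: d;
      [exact: nbhs_right_gt | apply: nbhs_right_lt; rewrite divr_gt0].
  move=> [x' d] [/= + /andP[d0 dr]] Kx' y Ky x'y; rewrite -ball_normE /= => xx'.
  have xy : `|x - y| < r.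
    rewrite -(subrK x' x) -addrA; apply: le_lt_trans (ler_normD _ _) _.
    by rewrite (splitr r) ltrD // (lt_trans x'y dr).
  have r2r : r / 2 < r by lra.
  have := xr _ Kx' (lt_trans xx' r2r); have := xr _ Ky xy.
  have -> : f x' - f y = (f x - f y) - (f x - f x') by ring.
  move=> h1 h2; apply: le_lt_trans (ler_normB _ _) _.
  by rewrite (splitr e) ltrD.
move=> Kd; have /filter_ex[d [d0 {}Kd]] : \forall d \near 0^'+, 0 < d /\ is_modulus d.
  by near=> d; split; near: d; [exact: nbhs_right_gt | exact: Kd].
by exists d => // x y Kx; exact: Kd.
Unshelve. all: by end_near.
Qed.

Lemma continuous_within_comp (U : topologicalType) (phi : U -> V) f K :
  {within K, continuous f} -> continuous phi -> (forall u, K (phi u)) ->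
  continuous (f \o phi).
Proof.
move=> /within_continuous_distP cf cphi Kphi u; apply/cvgrPdist_lt => e e0.
have [d d0 fd] := cf _ (Kphi u) e e0.
by apply: filterS ((cvgrPdist_lt _ _).1 (cphi u) d d0) => w; exact: fd.
Qed.

Lemma compact_continuous_ub (T : topologicalType) (g : T -> R) (K : set T) :
  compact K -> continuous g -> exists2 M, 0 <= M & forall x, K x -> g x <= M.
Proof.
move=> cK cg; have [M0 [_ M0g]] := compact_bounded
  (continuous_compact (continuous_subspaceT cg) cK).
exists (`|M0| + 1) => [|x Kx]; first by rewrite addr_ge0.
apply: le_trans (ler_norm _) (M0g _ _ _ _); last by exists x.
by rewrite (le_lt_trans (ler_norm M0)) // ltrDl.
Qed.

End metric_continuity.

Section row_vector_norms.
Variables (R : realType) (N : nat).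
Implicit Types (z : 'rV[R]_N) (c : R).

Lemma coord_le_norm z i : `|z 0 i| <= `|z|.
Proof.
change (`|z 0 i| <= mx_norm z); rewrite mx_normrE.
exact: (le_bigmax _ (fun ij : 'I_1 * 'I_N => `|z ij.1 ij.2|) (0, i)).
Qed.

Lemma norm_le_coord z c : 0 <= c -> (forall i, `|z 0 i| <= c) -> `|z| <= c.
Proof.
move=> c0 zc; change (mx_norm z <= c); rewrite mx_normrE.
by apply/bigmax_leP; split => // -[i j] _ /=; rewrite (ord1 i).
Qed.

Lemma enorm_ge0 z : 0 <= enorm z.
Proof. exact: sqrtr_ge0. Qed.

Lemma coord_le_enorm z i : `|z 0 i| <= enorm z.
Proof.
rewrite /enorm -sqrtr_sqr ler_wsqrtr // (bigD1 i) //= lerDl.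
by apply: sumr_ge0 => j _; exact: sqr_ge0.
Qed.

Lemma norm_le_enorm z : `|z| <= enorm z.
Proof. exact/norm_le_coord/coord_le_enorm/enorm_ge0. Qed.

Lemma enorm_le_norm z : enorm z <= N%:R * `|z|.
Proof.
rewrite /enorm -(ger0_norm (mulr_ge0 (ler0n _ N) (normr_ge0 z))) -sqrtr_sqr.
apply: ler_wsqrtr; apply: (@le_trans _ _ (\sum_(i < N) `|z| ^+ 2)).
  apply: ler_sum => i _; rewrite -real_normK ?num_real //.
  by rewrite lerXn2r ?nnegrE // coord_le_norm.
rewrite sumr_const card_ord exprMn -[leLHS]mulr_natl ler_wpM2r ?sqr_ge0 //.
by rewrite -natrX ler_nat; case: (N) => // n; rewrite expnS leq_pmulr.
Qed.

Lemma enormZ c z : enorm (c *: z) = `|c| * enorm z.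
Proof.
rewrite /enorm -sqrtr_sqr -sqrtrM ?sqr_ge0 // mulr_sumr; congr Num.sqrt.
by apply: eq_bigr => i _; rewrite mxE exprMn.
Qed.

Lemma enorm0 : enorm (0 : 'rV[R]_N) = 0.
Proof. by rewrite -(scale0r 0) enormZ normr0 mul0r. Qed.

Lemma enorm_continuous : continuous (@enorm R N).
Proof.
move=> z; apply: continuous_comp; last exact: sqrt_continuous.
apply: (continuous_big (op := +%R)) => [|i _ y]; first exact: add_continuous.
by apply: continuousM; exact: coord_continuous.
Qed.

Lemma closed_norm_le M : closed [set z : 'rV[R]_N | `|z| <= M].
Proof.
apply: (@preimage_closed _ _ (fun z : 'rV[R]_N => `|z|) [set r | r <= M]).
  by move=> ? _; exact: norm_continuous.
exact: closed_le.
Qed.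

Lemma closed_norm_bounded_compact (A : set 'rV[R]_N) M :
  closed A -> (forall z, A z -> `|z| <= M) -> compact A.
Proof.
move=> cA AM; apply: bounded_closed_compact cA.
exists M; split; first exact: num_real.
by move=> M' MM' z /AM zM /=; rewrite (le_trans zM) // ltW.
Qed.

Lemma bounded_closure_compact (A : set 'rV[R]_N) M :
  (forall z, A z -> `|z| <= M) -> compact (closure A).
Proof.
move=> AM; apply: (closed_norm_bounded_compact (M := M)); first exact: closed_closure.
move=> z Az; apply: closed_norm_le; by apply: closureS Az => y /AM.
Qed.

End row_vector_norms.

Section integral_on_segment.
Variable R : realType.
Local Notation mu := (@lebesgue_measure R).
Variable F : R -> R.
Hypotheses (cF : continuous F) (F_supp : forall t, 1 < `|t| -> F t = 0).

Local Notation I1 := (`[-1, 1]%classic : set R).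

Let restrict_I1 (T : pointedType) (G : R -> T) :
  (forall t, 1 < `|t| -> G t = point) -> G \_ I1 = G.
Proof.
move=> G_supp; apply/funext => t; rewrite patchE; case: ifPn => // /negP tI.
apply/esym/G_supp; rewrite ltNge; apply/negP => t1; apply: tI.
by rewrite inE /= in_itv /= -ler_norml.
Qed.

Let lebesgue_measure_I1 : fine (mu I1) = 2.
Proof. by rewrite lebesgue_measure_itv /= lte_fin ifT -?EFinD /=; lra. Qed.

Let integrable_I1 (G : R -> R) : continuous G -> mu.-integrable I1 (EFin \o G).
Proof.
move=> cG; apply: continuous_compact_integrable; first exact: segment_compact.
exact: continuous_subspaceT.
Qed.

Lemma integrable_supported_segment : mu.-integrable setT (EFin \o F).
Proof.
rewrite -(@restrict_I1 _ (EFin \o F)) => [|t /F_supp /= -> //].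
exact/(integrable_mkcond _ _).1/integrable_I1.
Qed.

Lemma Rintegral_supported_segment_le B : (forall t, `|F t| <= B) ->
  `|Rintegral mu setT F| <= 2 * B.
Proof.
move=> FB; apply: le_trans (le_normr_Rintegral measurableT integrable_supported_segment) _.
rewrite -(@restrict_I1 _ (fun t => `|F t|)) => [|t /F_supp ->]; last exact: normr0.
rewrite -Rintegral_mkcond.
apply: le_trans (_ : Rintegral mu I1 (fun=> B) <= _).
  apply: le_Rintegral => //.
  - apply: (integrable_I1 (G := fun t => `|F t|)) => t.
    by apply: continuous_comp; [exact: cF | exact: norm_continuous].
  - exact/(integrable_I1 (G := cst B))/cst_continuous.
by rewrite Rintegral_cst // lebesgue_measure_I1 mulrC.
Qed.

Lemma Rintegral_supported_segment_gt0 t0 : (forall t, 0 <= F t) -> 0 < F t0 ->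
  0 < Rintegral mu setT F.
Proof.
move=> F0 Ft0.
have Ft02 : 0 < F t0 / 2 by lra.
have [d d0 Fd] := (continuous_distP F).1 cF t0 _ Ft02.
set J := `[t0 - d / 2, t0 + d / 2]%classic.
have mJ : measurable J by exact: measurable_itv.
have FJ t : J t -> F t0 / 2 <= F t.
  rewrite /J /= in_itv /= => /andP[t1 t2].
  have /Fd : `|t0 - t| < d by rewrite ltr_norml; apply/andP; split; lra.
  by rewrite ltr_norml => /andP[_ ?]; lra.
have [mF _] := integrableP _ _ _ integrable_supported_segment.
rewrite /Rintegral -lte_fin fineK; last exact: integrable_fin_num integrable_supported_segment.
apply: (@lt_le_trans _ _ (\int[mu]_(x in J) (F x)%:E)%E); last first.
  by apply: ge0_subset_integral => // t _; rewrite lee_fin.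
apply: (@lt_le_trans _ _ (\int[mu]_(x in J) (cst (F t0 / 2)%:E) x)%E); last first.
  apply: ge0_le_integral => //; first by move=> t _; rewrite lee_fin; lra.
  by apply: measurable_funS mF.
rewrite integral_cst // [X in (_ * X)%E](_ : _ = d%:E); last first.
  have := lebesgue_measure_itv `[t0 - d / 2, t0 + d / 2].
  by rewrite /= lte_fin ifT -?EFinD => [->|]; [congr EFin; lra | lra].
by rewrite -EFinM lte_fin; apply: mulr_gt0 => //; lra.
Qed.

End integral_on_segment.

Section iterated_integral.
Variable R : realType.
Local Notation mu := (@lebesgue_measure R).

(* [`|z|] is the sup norm of ['rV_N], so these are the continuous functions
   supported in the cube [-1, 1]^N. *)
Definition test_fun N (g : 'rV[R]_N -> R) : Prop :=
  continuous g /\ forall z, 1 < `|z| -> g z = 0.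

Definition slice N (g : 'rV[R]_N.+1 -> R) (t : R) : 'rV[R]_N -> R :=
  fun v => g (row_mx (const_mx t : 'rV[R]_1) v).

Lemma intRN_slice N (g : 'rV[R]_N.+1 -> R) :
  intRN g = Rintegral mu setT (fun t => intRN (slice g t)).
Proof. by []. Qed.

Lemma intRN0 N : intRN (fun _ : 'rV[R]_N => 0) = 0.
Proof. by elim: N => [//|N IH]; rewrite intRN_slice /slice IH Rintegral_cst // mul0r. Qed.

Lemma slice_rsubmx N (g : 'rV[R]_N.+1 -> R) (z : 'M[R]_(1, 1 + N)) :
  slice g (z 0 (lshift N 0)) (rsubmx z) = g z.
Proof.
rewrite /slice; suff -> : row_mx (const_mx (z 0 (lshift N 0)) : 'rV[R]_1) (rsubmx z) = z by [].
rewrite -[RHS](@hsubmxK _ 1 1 N); congr row_mx.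
by apply/rowP => k; rewrite (ord1 k) !mxE.
Qed.

Section row_mx_const.
Variables (N : nat) (t : R) (v : 'rV[R]_N).
Local Notation tv := (row_mx (const_mx t : 'rV[R]_1) v).

Lemma norm_row_mx_constl : `|t| <= `|tv|.
Proof. by have := coord_le_norm tv (lshift N 0); rewrite row_mxEl mxE. Qed.

Lemma norm_row_mx_constr : `|v| <= `|tv|.
Proof.
apply: norm_le_coord => // i.
by have := coord_le_norm tv (rshift 1 i); rewrite row_mxEr.
Qed.

Lemma norm_row_mx_const_sub t' (v' : 'rV[R]_N) :
  `|tv - row_mx (const_mx t' : 'rV[R]_1) v'| <= `|t - t'| + `|v - v'|.
Proof.
rewrite opp_row_mx add_row_mx; apply: norm_le_coord; first by rewrite addr_ge0.
move=> j; rewrite -(splitK j); case: (fintype.split j) => k /=.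
- by rewrite row_mxEl (ord1 k) !mxE lerDl.
- by rewrite row_mxEr (le_trans (coord_le_norm _ _)) // lerDr.
Qed.

End row_mx_const.

Lemma test_fun_uniform_continuous N (g : 'rV[R]_N -> R) : test_fun g ->
  forall e, 0 < e -> exists2 d, 0 < d &
    forall z w, `|z - w| < d -> `|g z - g w| < e.
Proof.
move=> [cg g_supp] e e0.
pose K := [set z : 'rV[R]_N | `|z| <= 2].
have cK : compact K by apply: (closed_norm_bounded_compact (M := 2)) => //; exact: closed_norm_le.
have [d d0 gd] := compact_uniform_continuous cK (continuous_subspaceT cg) e0.
exists (Num.min d 1) => [|z w]; first by rewrite lt_min d0 ltr01.
have outK a b : `|a - b| < 1 -> ~ K a -> g a = 0 /\ g b = 0.
  move=> ab /negP; rewrite /K /= -ltNge => a2.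
  have : `|a| <= `|a - b| + `|b| by rewrite -{1}(subrK b a) ler_normD.
  by move=> ?; split; apply: g_supp; lra.
rewrite lt_min => /andP[zwd zw1].
have [Kz|/(outK _ _ zw1)[-> ->]] := pselect (K z); last by rewrite subrr normr0.
have [Kw|] := pselect (K w); first exact: gd.
by rewrite distrC in zw1; move=> /(outK _ _ zw1)[-> ->]; rewrite subrr normr0.
Qed.

Lemma slice_test_fun N (g : 'rV[R]_N.+1 -> R) t : test_fun g -> test_fun (slice g t).
Proof.
move=> tg; split => [|v v1]; last by apply: tg.2; apply: lt_le_trans v1 _; exact: norm_row_mx_constr.
apply/continuous_distP => v e e0; have [d d0 gd] := test_fun_uniform_continuous tg e0.
exists d => // v' vv'; apply: gd; apply: le_lt_trans (norm_row_mx_const_sub _ _ _ _) _.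
by rewrite subrr normr0 add0r.
Qed.

Lemma intRN_slice_supp N (g : 'rV[R]_N.+1 -> R) : test_fun g ->
  forall t, 1 < `|t| -> intRN (slice g t) = 0.
Proof.
move=> tg t t1; rewrite -(intRN0 N); congr intRN; apply/funext => v.
by apply: tg.2; apply: lt_le_trans t1 _; exact: norm_row_mx_constl.
Qed.

Section continuous_slice_integral.
Variable N : nat.
Hypothesis intRN_lip : forall (g h : 'rV[R]_N -> R) B, test_fun g -> test_fun h ->
  (forall z, `|g z - h z| <= B) -> `|intRN g - intRN h| <= 2 ^+ N * B.

Lemma continuous_intRN_slice_of (g : 'rV[R]_N.+1 -> R) : test_fun g ->
  continuous (fun t => intRN (slice g t)).
Proof.
move=> tg; apply/continuous_distP => t e e0.
have eN0 : 0 < e / 2 ^+ N.+1 by rewrite divr_gt0 ?exprn_gt0.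
have [d d0 gd] := test_fun_uniform_continuous tg eN0.
exists d => // t' tt'; apply: le_lt_trans (intRN_lip (B := e / 2 ^+ N.+1) _ _ _) _.
- exact: slice_test_fun.
- exact: slice_test_fun.
- move=> v; apply/ltW/gd; apply: le_lt_trans (norm_row_mx_const_sub _ _ _ _) _.
  by rewrite subrr normr0 addr0.
have ? : 0 < 2 ^+ N :> R by rewrite exprn_gt0.
have -> : 2 ^+ N * (e / 2 ^+ N.+1) = e / 2 by rewrite exprS; field.
lra.
Qed.

Lemma integrable_intRN_slice_of (g : 'rV[R]_N.+1 -> R) : test_fun g ->
  mu.-integrable setT (EFin \o (fun t => intRN (slice g t))).
Proof.
move=> tg; apply: integrable_supported_segment (intRN_slice_supp tg).
exact: continuous_intRN_slice_of.
Qed.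

End continuous_slice_integral.

Lemma intRN_lipschitz N (g h : 'rV[R]_N -> R) B : test_fun g -> test_fun h ->
  (forall z, `|g z - h z| <= B) -> `|intRN g - intRN h| <= 2 ^+ N * B.
Proof.
elim: N g h B => [|N IH] g h B tg th gh; first by rewrite expr0 mul1r; exact: gh.
rewrite !intRN_slice -RintegralB ?integrable_intRN_slice_of // exprS -mulrA.
apply: (@Rintegral_supported_segment_le _ (fun t => intRN (slice g t) - intRN (slice h t)))
  => [t|t t1|t].
- by apply: continuousB; exact: continuous_intRN_slice_of.
- by rewrite (intRN_slice_supp tg t1) (intRN_slice_supp th t1) subrr.
- by apply: IH => [||v]; [exact: slice_test_fun | exact: slice_test_fun | exact: gh].
Qed.

Lemma continuous_intRN_slice N (g : 'rV[R]_N.+1 -> R) : test_fun g ->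
  continuous (fun t => intRN (slice g t)).
Proof. exact/continuous_intRN_slice_of/intRN_lipschitz. Qed.

Lemma integrable_intRN_slice N (g : 'rV[R]_N.+1 -> R) : test_fun g ->
  mu.-integrable setT (EFin \o (fun t => intRN (slice g t))).
Proof. exact/integrable_intRN_slice_of/intRN_lipschitz. Qed.

Lemma intRN_scale N c (g : 'rV[R]_N -> R) : test_fun g ->
  intRN (fun z => c * g z) = c * intRN g.
Proof.
elim: N g => [//|N IH] g tg.
rewrite !intRN_slice -RintegralZl ?integrable_intRN_slice //.
by apply: eq_Rintegral => t _; apply: IH; exact: slice_test_fun.
Qed.

Lemma intRN_ge0 N (g : 'rV[R]_N -> R) : (forall z, 0 <= g z) -> 0 <= intRN g.
Proof.
elim: N g => [|N IH] g g0; first exact: g0.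
by rewrite intRN_slice; apply: Rintegral_ge0 => t _; apply: IH => v; exact: g0.
Qed.

Lemma intRN_gt0 N (g : 'rV[R]_N -> R) z0 : test_fun g -> (forall z, 0 <= g z) ->
  0 < g z0 -> 0 < intRN g.
Proof.
elim: N g z0 => [|N IH] g z0 tg g0 gz0; first by rewrite (thinmx0 z0) in gz0.
rewrite intRN_slice.
have := Rintegral_supported_segment_gt0 (continuous_intRN_slice tg) (intRN_slice_supp tg)
  (t0 := z0 0 (@lshift 1 N 0)); apply => [t|].
  by apply: intRN_ge0 => v; exact: g0.
apply: (IH _ (rsubmx (z0 : 'M[R]_(1, 1 + N)))) => [|v|]; first exact: slice_test_fun.
  exact: g0.
by rewrite slice_rsubmx.
Qed.

End iterated_integral.

Section geometry.
Variables (R : realType) (N : nat).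
Implicit Types (Omega : set 'rV[R]_N) (x d z : 'rV[R]_N).

Lemma segment_in_open Omega x d : open Omega -> Omega x ->
  (forall s, 0 <= s <= 1 -> ~ bdry Omega (x - s *: d)) -> Omega (x - d).
Proof.
move=> oO Ox nbd; have iO : Omega° = Omega := (interior_id Omega).1 oO.
pose g s : 'rV[R]_N := x - s *: d.
have cg : continuous g.
  move=> s; apply: (@continuousB _ _ _ (fun=> x) (fun s : R => s *: d) s).
    exact: cst_continuous.
  by apply: (@continuousZ _ _ _ id (fun=> d)); [exact: cvg_id | exact: cst_continuous].
suff : (`[0, 1]%classic `&` (g @^-1` Omega)) 1 by move=> [_]; rewrite /g /= scale1r.
have -> : `[0, 1]%classic `&` (g @^-1` Omega) = `[0, 1]%classic; last first.
  by rewrite /= in_itv /= ler01 lexx.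
apply: segment_connected.
- by exists 0; rewrite /= in_itv /= lexx ler01 /g scale0r subr0.
- by exists (g @^-1` Omega) => //; apply: open_comp => // s _; exact: cg.
exists (g @^-1` closure Omega).
  by apply: preimage_closed; [move=> ? _; exact: cg | exact: closed_closure].
apply/seteqP; split => s [s01 gs]; split => //; first exact: subset_closure.
apply: contrapT => Ngs; apply: (nbd s); first by move: s01; rewrite /= in_itv.
by split => //; rewrite iO.
Qed.

Lemma ball_in_open Omega x d : open Omega -> Omega x ->
  (forall p, bdry Omega p -> enorm d < enorm (x - p)) -> Omega (x - d).
Proof.
move=> oO Ox dp; apply: segment_in_open => // s /andP[s0 s1] /dp.
by rewrite opprB addrC subrK enormZ ger0_norm // ltNge ler_piMl ?enorm_ge0.
Qed.

Lemma lt_distE (r : R) x (A : set 'rV[R]_N) p : (r%:E < distE x A)%E -> A p ->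
  r < enorm (x - p).
Proof.
by move=> rA Ap; rewrite -lte_fin (lt_le_trans rA) //; apply: ereal_inf_lbound; exists p.
Qed.

Lemma notin_supp_ball Omega (f : 'rV[R]_N -> R) p : ~ supp Omega f p <->
  exists2 r, 0 < r & forall w, Omega w -> `|p - w| < r -> f w = 0.
Proof.
split => [nsp|[r r0 fr] sp].
  apply: contrapT => nr; apply: nsp => B /nbhs_ballP[r r0 rB].
  apply: contrapT => nB; apply: nr; exists r => // w Ow pw.
  apply: contrapT => fw; apply: nB; exists w; split => //.
  by apply: rB; rewrite -ball_normE.
have [w [[Ow fw] pw]] := sp _ (nbhsx_ballx p _ r0).
by rewrite -ball_normE in pw; apply/fw/fr.
Qed.

Definition ball_retract z : 'rV[R]_N := (Num.max 1 (enorm z))^-1 *: z.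

Lemma enorm_ball_retract_le1 z : enorm (ball_retract z) <= 1.
Proof.
have m0 : 0 < Num.max 1 (enorm z) by rewrite lt_max ltr01.
rewrite /ball_retract enormZ ger0_norm; last by rewrite invr_ge0 ltW.
by rewrite mulrC ler_pdivrMr // mul1r le_max lexx orbT.
Qed.

Lemma ball_retract_id z : enorm z < 1 -> ball_retract z = z.
Proof. by move=> z1; rewrite /ball_retract max_l ?ltW // invr1 scale1r. Qed.

Lemma continuous_ball_retract : continuous ball_retract.
Proof.
move=> z; apply: (@continuousZ _ _ _ (fun z => (Num.max 1 (enorm z))^-1) id); last exact: cvg_id.
apply: continuous_comp; last by apply: inv_continuous; rewrite gt_eqF // lt_max ltr01.
by apply: (@continuous_max _ _ (fun=> 1) (@enorm R N)); [exact: cst_continuous | exact: enorm_continuous].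
Qed.

End geometry.

Section mollification.
Variables (R : realType) (N : nat) (Omega : set 'rV[R]_N) (rho eta : 'rV[R]_N -> R).
Hypotheses (Omega_open : open Omega) (closure_Omega_compact : compact (closure Omega)).
Hypotheses (rho_cont : continuous rho) (rho_ge0 : forall z, 0 <= rho z)
  (rho_le1 : forall z, rho z <= 1) (rho_supp : forall z, 1 <= enorm z -> rho z = 0)
  (rho0_gt0 : 0 < rho 0).
Hypotheses (eta_cont : continuous eta) (eta_ge0 : forall x, 0 <= eta x)
  (eta_bdry : forall p, bdry Omega p -> eta p = 0)
  (eta_lt_dist : forall x p, Omega x -> bdry Omega p -> eta x < enorm (x - p)).
Implicit Types (f : 'rV[R]_N -> R) (x y z c : 'rV[R]_N).

(* As rho vanishes off the open unit ball, the integrand of T may go through the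
   radial retraction onto the closed ball: this makes it continuous in z and keeps
   the sampled points in the closure of Omega. *)
Definition mollify_integrand f x s z := rho z * f (x - s *: ball_retract z).

Definition mollify f x s := (intRN rho)^-1 * intRN (mollify_integrand f x s).

Lemma rho_test_fun : test_fun rho.
Proof.
split => // z z1; apply: rho_supp; apply: ltW.
exact: lt_le_trans z1 (norm_le_enorm z).
Qed.

Lemma intRN_rho_gt0 : 0 < intRN rho.
Proof. exact: intRN_gt0 rho_test_fun rho_ge0 rho0_gt0. Qed.

Lemma intRN_ball_mollify_integrand f x s :
  intRN (fun z => if enorm z < 1 then rho z * f (x - s *: z) else 0) =
  intRN (mollify_integrand f x s).
Proof.
congr intRN; apply/funext => z; rewrite /mollify_integrand.
case: ltP => [/ball_retract_id -> // | /rho_supp ->]; by rewrite mul0r.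
Qed.

Lemma Mrho_intRN : Mrho rho = (intRN rho)^-1.
Proof.
rewrite /Mrho; congr (intRN _)^-1; apply/funext => z.
by case: ltP => // /rho_supp ->.
Qed.

Lemma Top_mollify f x : Top rho eta f x = mollify f x (eta x).
Proof. by rewrite /Top Mrho_intRN intRN_ball_mollify_integrand. Qed.

Lemma Topn_mollify n f x : Topn rho eta n f x = mollify f x (eta x / n%:R).
Proof. by rewrite /Topn Mrho_intRN intRN_ball_mollify_integrand. Qed.

Lemma mollify0 f x : mollify f x 0 = f x.
Proof.
rewrite /mollify /mollify_integrand; under eq_fun do rewrite scale0r subr0 mulrC.
rewrite intRN_scale; last exact: rho_test_fun.
by rewrite mulrCA mulVf ?mulr1 // gt_eqF // intRN_rho_gt0.
Qed.

Lemma shift_in_Omega x s c : Omega x -> 0 <= s <= eta x -> enorm c <= 1 ->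
  Omega (x - s *: c).
Proof.
move=> Ox /andP[s0 sx] c1; apply: ball_in_open => // p /(eta_lt_dist Ox).
apply: le_lt_trans; rewrite enormZ ger0_norm // -[leRHS]mulr1.
by apply: ler_pM => //; exact: enorm_ge0.
Qed.

Lemma shift_in_closure x s c : closure Omega x -> 0 <= s <= eta x -> enorm c <= 1 ->
  closure Omega (x - s *: c).
Proof.
move=> clx s_eta c1; have [Ox|nOx] := pselect (Omega x).
  exact/subset_closure/shift_in_Omega.
have /eta_bdry ex0 : bdry Omega x by split; rewrite // ((interior_id Omega).1 Omega_open).
move: s_eta; rewrite ex0 => /andP[s0 s0']; have -> : s = 0 by apply/le_anti/andP.
by rewrite scale0r subr0.
Qed.

Lemma mollify_integrand_test_fun f x s : {within closure Omega, continuous f} ->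
  closure Omega x -> 0 <= s <= eta x -> test_fun (mollify_integrand f x s).
Proof.
move=> cf clx s_eta; split => [z|z z1]; last first.
  rewrite /mollify_integrand rho_supp ?mul0r //; apply: ltW.
  exact: lt_le_trans z1 (norm_le_enorm z).
apply: continuousM; first exact: rho_cont.
apply: (continuous_within_comp cf (phi := fun z => x - s *: ball_retract z)).
- move=> w; apply: (@continuousB _ _ _ (fun=> x) (fun w => s *: ball_retract w)).
    exact: cst_continuous.
  apply: (@continuousZ _ _ _ (fun=> s)); first exact: cst_continuous.
  exact: continuous_ball_retract.
- by move=> w; apply: shift_in_closure => //; exact: enorm_ball_retract_le1.
Qed.

Let C := (intRN rho)^-1 * 2 ^+ N.

Let C_gt0 : 0 < C.
Proof. by rewrite mulr_gt0 ?invr_gt0 ?intRN_rho_gt0 ?exprn_gt0. Qed.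

Let share_gt0 e : 0 < e -> 0 < e / (2 * C).
Proof. by move=> e0; rewrite divr_gt0 // mulr_gt0. Qed.

Let mulC_share e : C * (e / (2 * C)) = e / 2.
Proof. by field; rewrite gt_eqF. Qed.

Lemma mollify_dist f x y s s' B : {within closure Omega, continuous f} ->
  closure Omega x -> closure Omega y -> 0 <= s <= eta x -> 0 <= s' <= eta y ->
  (forall c, enorm c <= 1 -> `|f (x - s *: c) - f (y - s' *: c)| <= B) ->
  `|mollify f x s - mollify f y s'| <= C * B.
Proof.
move=> cf clx cly sx sy fB.
have irho_ge0 : 0 <= (intRN rho)^-1 by rewrite invr_ge0 ltW // intRN_rho_gt0.
rewrite /mollify -mulrBr normrM -mulrA ger0_norm // ler_wpM2l //.
apply: intRN_lipschitz; try exact: mollify_integrand_test_fun.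
move=> z; rewrite /mollify_integrand -mulrBr normrM ger0_norm // -[leRHS]mul1r.
apply: ler_pM => //.
exact/fB/enorm_ball_retract_le1.
Qed.

Lemma Top_eta0 f x : eta x = 0 -> Top rho eta f x = f x.
Proof. by move=> ex0; rewrite Top_mollify ex0 mollify0. Qed.

Lemma continuous_Top f : {within closure Omega, continuous f} ->
  {within closure Omega, continuous (Top rho eta f)}.
Proof.
move=> cf; apply/within_continuous_distP => x clx e e0.
have eC0 := share_gt0 e0.
have [df df0 fdf] := compact_uniform_continuous closure_Omega_compact cf eC0.
have df20 : 0 < df / 2 by rewrite divr_gt0.
have [de de0 etade] := (continuous_distP eta).1 eta_cont x _ df20.
exists (Num.min (df / 2) de) => [|y cly]; first by rewrite lt_min df20 de0.
rewrite lt_min => /andP[xydf xyde]; rewrite !Top_mollify.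
apply: le_lt_trans (mollify_dist (B := e / (2 * C)) cf clx cly _ _ _) _.
- by rewrite eta_ge0 lexx.
- by rewrite eta_ge0 lexx.
- move=> c c1; apply/ltW/fdf; try by apply: shift_in_closure; rewrite ?eta_ge0 ?lexx.
  have -> : x - eta x *: c - (y - eta y *: c) = (x - y) - (eta x - eta y) *: c.
    by rewrite scalerBl !opprD !opprK addrACA.
  apply: le_lt_trans (ler_normB _ _) _.
  rewrite normrZ (splitr df) ltr_leD // -[leRHS]mulr1 ler_pM //.
  + exact: ltW (etade _ xyde).
  + exact: le_trans (norm_le_enorm c) c1.
- by rewrite mulC_share; lra.
Qed.

Lemma Topn_uniform_cvg f : {within closure Omega, continuous f} ->
  forall e, 0 < e -> exists n0 : nat, forall n, (n0 <= n)%N ->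
    forall x, Omega x -> `|Topn rho eta n f x - f x| < e.
Proof.
move=> cf e e0.
have eC0 := share_gt0 e0.
have [df df0 fdf] := compact_uniform_continuous closure_Omega_compact cf eC0.
have [E E0 etaE] := compact_continuous_ub closure_Omega_compact eta_cont.
have Edf0 : 0 <= E / df by rewrite divr_ge0 // ltW.
exists (Num.Def.archi_bound (E / df)).+1 => n n_gt x Ox.
have n0 : 0 < n%:R :> R by rewrite ltr0n (leq_trans _ n_gt).
have Edfn : E / df < n%:R.
  by apply: lt_le_trans (archi_boundP Edf0) _; rewrite ler_nat ltnW.
have clx := subset_closure Ox.
have s_eta : 0 <= eta x / n%:R <= eta x.
  rewrite divr_ge0 ?eta_ge0 ?ler0n //= ler_pdivrMr // ler_peMr ?eta_ge0 //.
  by rewrite ler1n (leq_trans _ n_gt).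
rewrite Topn_mollify -[X in _ - X](mollify0 f x).
apply: le_lt_trans (mollify_dist (B := e / (2 * C)) cf clx clx s_eta _ _) _.
- by rewrite lexx eta_ge0.
- move=> c c1; apply/ltW/fdf; first exact: shift_in_closure.
    by rewrite scale0r subr0.
  rewrite scale0r subr0 addrAC subrr add0r normrN normrZ ger0_norm; last by case/andP: s_eta.
  apply: (@le_lt_trans _ _ (E / n%:R)); last by rewrite ltr_pdivrMr // mulrC -ltr_pdivrMr.
  rewrite -[leRHS]mulr1 ler_pM ?divr_ge0 ?eta_ge0 ?ler0n ?ler_pM2r ?invr_gt0 ?etaE //.
  exact: le_trans (norm_le_enorm c) c1.
- by rewrite mulC_share; lra.
Qed.

(* The factor N + 1 accounts for eta being bounded by the Euclidean distance while
   distances are measured in the sup norm. *)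
Lemma Top_eq0_near_bdry f p r : bdry Omega p ->
  (forall w, Omega w -> `|p - w| < r -> f w = 0) ->
  forall x, Omega x -> `|p - x| < r / (N%:R + 1) -> Top rho eta f x = 0.
Proof.
move=> bp fr x Ox px; have N1 : 0 < N%:R + 1 :> R by rewrite ltr_wpDl.
rewrite Top_mollify /mollify.
suff -> : mollify_integrand f x (eta x) = fun=> 0 by rewrite intRN0 mulr0.
apply/funext => z; rewrite /mollify_integrand.
have c1 := enorm_ball_retract_le1 z.
rewrite fr ?mulr0 //; first by apply: shift_in_Omega; rewrite ?eta_ge0 ?lexx.
have eta_px : eta x <= N%:R * `|p - x|.
  by rewrite distrC; apply/ltW/(lt_le_trans (eta_lt_dist Ox bp))/enorm_le_norm.
rewrite opprB addrCA addrC; apply: le_lt_trans (ler_normD _ _) _.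
rewrite normrZ ger0_norm ?eta_ge0 //.
apply: (@le_lt_trans _ _ ((N%:R + 1) * `|p - x|)); last by rewrite mulrC -ltr_pdivlMr.
rewrite mulrDl mul1r [leRHS]addrC lerD2l (le_trans _ eta_px) // -[leRHS]mulr1 ler_pM //.
exact: le_trans (norm_le_enorm _) c1.
Qed.

Lemma supp_Top_disjoint f Gamma : Gamma `<=` bdry Omega ->
  supp Omega f `&` Gamma = set0 -> supp Omega (Top rho eta f) `&` Gamma = set0.
Proof.
move=> Gbd fG; apply/seteqP; split => // p [sTp Gp].
have /notin_supp_ball[r r0 fr] : ~ supp Omega f p.
  by move=> sfp; have : (supp Omega f `&` Gamma) p by []; rewrite fG.
apply: (notin_supp_ball _ _ _).2 sTp; exists (r / (N%:R + 1)).
  by rewrite divr_gt0 // ltr_wpDl.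
exact: Top_eq0_near_bdry (Gbd p Gp) fr.
Qed.

End mollification.

Theorem proposition2p3 (R : realType) (N : nat) (Omega : set 'rV[R]_N)
  (rho : 'rV[R]_N -> R) (Delta : set 'rV[R]_N) (eta : 'rV[R]_N -> R) :
  (0 < N)%N ->
  open Omega ->
  (exists M : R, forall x, Omega x -> enorm x <= M) ->
  (* assumptions on rho *)
  smooth rho ->
  (forall x, 0 <= rho x <= 1) ->
  (forall x, rho x = 0 <-> 1 <= enorm x) ->
  (forall x y, enorm x = enorm y -> rho x = rho y) ->
  (forall x y, enorm y = 2^-1 -> enorm x < 2^-1 -> rho y <= rho x) ->
  (* assumptions on Delta and Theta *)
  Delta `<=` closure Omega ->
  closed (bdry Omega `|` Delta) ->
  (* assumptions on eta *)
  smooth eta ->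
  (forall x, 0 <= eta x) ->
  (forall x, eta x = 0 <-> (bdry Omega `|` Delta) x) ->
  (forall (l : seq 'I_N) x, (bdry Omega `|` Delta) x -> ipartial l eta x = 0) ->
  (forall x, ~ (bdry Omega `|` Delta) x ->
     ((eta x)%:E < distE x (bdry Omega `|` Delta)%classic)%E) ->
  (forall f : 'rV[R]_N -> R, {within closure Omega, continuous f} ->
     (exists g : 'rV[R]_N -> R,
        {within closure Omega, continuous g} /\
        (forall x, Omega x -> g x = Top rho eta f x) /\
        (forall x, (bdry Omega `|` Delta) x -> g x = f x)) /\
     (forall e : R, 0 < e -> exists n0 : nat, forall n : nat, (n0 <= n)%N ->
        forall x, Omega x -> `|Topn rho eta n f x - f x| < e))
  /\
  (forall (f : 'rV[R]_N -> R) (Gamma : set 'rV[R]_N),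
     {within Omega, continuous f} ->
     closed Gamma -> Gamma `<=` bdry Omega ->
     supp Omega f `&` Gamma = set0 ->
     supp Omega (Top rho eta f) `&` Gamma = set0).
Proof.
(* Smoothness is only used through continuity. *)
move=> _ oO [M OM] srho rho01 rho_eq0 _ _ _ _ seta eta_ge0 eta_eq0 _ eta_dist.
have clOc : compact (closure Omega).
  by apply: (bounded_closure_compact (M := M)) => x /OM; exact: le_trans (norm_le_enorm x).
have rho_cont : continuous rho := (srho [::]).1.
have eta_cont : continuous eta := (seta [::]).1.
have rho_ge0 z : 0 <= rho z by case/andP: (rho01 z).
have rho_le1 z : rho z <= 1 by case/andP: (rho01 z).
have rho_supp z : 1 <= enorm z -> rho z = 0 by move/(rho_eq0 z).2.
have rho0_gt0 : 0 < rho 0.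
  by rewrite lt_neqAle eq_sym rho_ge0 andbT; apply/eqP => /rho_eq0; rewrite enorm0 ler10.
have eta_bdry p : bdry Omega p -> eta p = 0 by move=> bp; apply/eta_eq0; left.
have eta_lt_dist x p : Omega x -> bdry Omega p -> eta x < enorm (x - p).
  move=> Ox bp; have [Tx|nTx] := pselect ((bdry Omega `|` Delta) x).
    rewrite (eta_eq0 x).2 //; apply: lt_le_trans (norm_le_enorm _).
    rewrite normr_gt0 subr_eq0; apply/eqP => xp; case: bp => _.
    by rewrite -xp ((interior_id Omega).1 oO).
  by apply: lt_distE (eta_dist x nTx) _; left.
split => [f cf|f Gamma _ _ Gbd]; last exact: supp_Top_disjoint.
split; last exact: Topn_uniform_cvg.
exists (Top rho eta f); split; first exact: continuous_Top.
by split => // x /(eta_eq0 x).2; exact: Top_eta0.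
Qed.
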